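(* Let $\rho$ be a nonlinearity, $V_{\mathrm{in}}$ a nonempty finite set and $D\in\mathbb{N}$. The binary relation of $\rho$-isomorphism is an equivalence relation on both $\mathscr{N}^{V_{\mathrm{in}},D}_{\mathrm{G}}$ and $\mathscr{N}^{V_{\mathrm{in}},D}_{\mathrm{L}}$, and if $\mathcal{N}$ is $\rho$-isomorphic to $\mathcal{M}$, then $R_{\mathcal{N}}=R_{\mathcal{M}}$.
   Context: A nonlinearity is a continuous $\rho:\mathbb{R}\to\mathbb{R}$ not of the form $t\mapsto at+b$. GFNN with $D$-dim output: $\mathcal{N}=(V,E,V_{\mathrm{in}},V_{\mathrm{out}},\Omega,\Theta,\Lambda)$, $(V,E)$ finite loopless DAG, $V_{\mathrm{in}}$ the parentless nodes, $V_{\mathrm{out}}\subset V\setminus V_{\mathrm{in}}$, nonzero real weights $\omega_{\tilde vv}$ on edges $(v,\tilde v)$, real biases on non-input nodes, real output scalars $\lambda^{(r)},\lambda^{(r)}_w$. $\mathrm{anc}(S)$: nodes with a directed path (length $\ge0$) into $S$. $\mathrm{lv}=0$ on parentless nodes, else $1+$max of parents; LFNN: $\mathrm{lv}(\tilde v)=\mathrm{lv}(v)+1$ on edges. $R_u(t)=t_u$ on inputs, $R_u(t)=\rho(\sum_{v\in\mathrm{par}(u)}\omega_{uv}R_v(t)+\theta_u)$; $R_{\mathcal{N}}=(\lambda^{(r)}+\sum_w\lambda^{(r)}_wR_w)_r$. Non-degenerate: $V\setminus V_{\mathrm{in}}\subset\mathrm{anc}(V_{\mathrm{out}})$ and each output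 node has some nonzero $\lambda^{(r)}_w$. Affine symmetry: $(\zeta,\{(\alpha_s,\beta_s,\gamma_s)\}_{s\in\mathcal{I}})$, $\mathcal{I}$ nonempty finite, $\sum_s\alpha_s\rho(\beta_st+\gamma_s)=\zeta$ $\forall t$, no proper $\mathcal{I}'$ with $\{\rho(\beta_s\cdot+\gamma_s)\}_{\mathcal{I}'}\cup\{\mathbf1\}$ linearly dependent. Reducible: some nonempty $U$ with common parent set $P$, nonzero $\kappa_v,\beta_u$ with $\omega_{uv}=\beta_u\kappa_v$, and $\zeta$, nonzero $\alpha_u$ making $(\zeta,\{(\alpha_u,\beta_u,\theta_u)\}_{u\in U})$ an affine symmetry. Regular = irreducible + non-degenerate. $\mathscr{N}^{V_{\mathrm{in}},D}_{\mathrm{G}}$ ($\mathscr{N}^{V_{\mathrm{in}},D}_{\mathrm{L}}$) = regular GFNNs (LFNNs) with $D$-dim output and input set $V_{\mathrm{in}}$. $\rho$-modification of an irreducible $\mathcal{N}$: $A,B\subset V\setminus V_{\mathrm{in}}$ disjoint, $A\ne\varnothing$, common parent set $P$, $W=\{w:\mathrm{par}(w)\cap A\ne\varnothing\}$; (i) affine symmetry $(\zeta,\{(\alpha_u,\beta_u,\theta_u)\}_{u\in A\cup B}\cup\{(\alpha'_p,\beta'_p,\gamma'_p)\}_{p=1}^n)$, $n\ge1$; (ii) nonzero $\kappa_v$ with $\omega_{uv}=\beta_u\kappa_v$; (iii) $A\subset\mathrm{par}(w)$, nonzero $\nu_w$ with $\omega_{wu}=\nu_w\alpha_u$ ($w\in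 W,u\in A$); (iv) $A\cap V_{\mathrm{out}}=\varnothing$ or $A\subset V_{\mathrm{out}}$ with reals $\mu_r$, $\lambda^{(r)}_u=\mu_r\alpha_u$ ($u\in A$). Delete $A$ and incident edges; add $C=\{u'_1,\dots,u'_n\}$ with edges $(v,u'_p)$ of weight $\beta'_p\kappa_v$, bias $\gamma'_p$, edges $(u'_p,w)$ of weight $-\alpha'_p\nu_w$; $\theta_w\mapsto\theta_w+\zeta\nu_w$; for $w\in W,u\in B$ add edge of weight $-\alpha_u\nu_w$ if absent, else $\omega_{wu}\mapsto\omega_{wu}-\alpha_u\nu_w$, deleting it if $0$. If $A\subset V_{\mathrm{out}}$: $\lambda^{(r)}\mapsto\lambda^{(r)}+\zeta\mu_r$, $\lambda^{(r)}_{u'_p}=-\alpha'_p\mu_r$, for $u\in B$ $\lambda^{(r)}_u$ ($0$ if $u\notin V_{\mathrm{out}}$) $\mapsto\lambda^{(r)}_u-\alpha_u\mu_r$, output set $(V_{\mathrm{out}}\setminus(A\cup B))\cup C\cup\{u\in B:\text{some new }\lambda^{(r)}_u\ne0\}$; else outputs unchanged. Regular GFNNs $\mathcal{N},\mathcal{M}$ (same $D$, same inputs) are $\rho$-isomorphic if there are regular GFNNs $\mathcal{N}_1=\mathcal{N},\dots,\mathcal{N}_n=\mathcal{M}$ ($n\ge1$) with $D$-dim output and the same input set, each $\mathcal{N}_{j+1}$ a $\rho$-modification of $\mathcal{N}_j$. *)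

From HB Require Import structures.
From mathcomp Require Import all_boot all_order all_algebra.
From mathcomp Require Import finmap.
From mathcomp Require Import reals topology normedtype.

Set Implicit Arguments.
Unset Strict Implicit.
Unset Printing Implicit Defensive.

Import Order.TTheory GRing.Theory Num.Theory.
Import numFieldNormedType.Exports.
Local Open Scope fset_scope.
Local Open Scope ring_scope.

(*  - [weight N u v] is the weight omega_{uv} of the edge (v,u); the edge    *)
(*    set is exactly {(v,u) | weight N u v != 0} (weights on edges are       *)
(*    nonzero, so this is a bijective encoding of (E, Omega));               *)
(*  - biases are 0 outside non-input nodes, output scalars lam r w are 0     *)
(*    for w outside the output set (junk-free, canonical representation).    *)

Section Defs.
Variable R : realType.

Definition nonlinearity (rho : R -> R) : Prop :=
  continuous rho /\ ~ (exists a b : R, forall t, rho t = a * t + b).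

Record GFNN (D : nat) := MkGFNN {
  nodes : {fset nat};
  ins : {fset nat};
  outs : {fset nat};
  weight : nat -> nat -> R;
  bias : nat -> R;
  lam0 : 'I_D -> R;
  lam : 'I_D -> nat -> R
}.

Variable D : nat.
Implicit Types N M : GFNN D.

Definition edgeb N (v u : nat) : bool :=
  [&& v \in nodes N, u \in nodes N & weight N u v != 0].

Definition parentless N (u : nat) : bool := ~~ has (fun v => edgeb N v u) (nodes N).

Definition anc N (S : {fset nat}) (v : nat) : Prop :=
  v \in nodes N /\ exists p : seq nat, path (edgeb N) v p /\ last v p \in S.

Definition acyclic N : Prop :=
  forall v (p : seq nat), path (edgeb N) v p -> p != [::] -> last v p != v.

Definition wf_GFNN N : Prop :=
  acyclic N /\
  (forall u, u \in ins N <-> (u \in nodes N /\ parentless N u)) /\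
  (forall u, u \in outs N -> u \in nodes N /\ u \notin ins N) /\
  (forall u v, weight N u v != 0 -> u \in nodes N /\ v \in nodes N) /\
  (forall u, bias N u != 0 -> u \in nodes N /\ u \notin ins N) /\
  (forall r w, lam N r w != 0 -> w \in outs N).

Fixpoint lvk N (k : nat) (u : nat) : nat :=
  match k with
  | 0 => 0%N
  | k'.+1 => if parentless N u then 0%N
             else (\max_(v <- nodes N | edgeb N v u) lvk N k' v).+1
  end.
Definition lv N (u : nat) : nat := lvk N #|` nodes N| u.

Definition layered N : Prop := forall v u, edgeb N v u -> lv N u = (lv N v).+1.

(* realization; inputs t : nat -> R (only values on the input set matter) *)
Fixpoint real_node (rho : R -> R) N (t : nat -> R) (k : nat) (u : nat) : R :=
  if u \in ins N then t u else
  match k with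
  | 0 => 0
  | k'.+1 => rho (\sum_(v <- nodes N) weight N u v * real_node rho N t k' v
                  + bias N u)
  end.

Definition realization (rho : R -> R) N (t : nat -> R) : 'I_D -> R :=
  fun r => lam0 N r + \sum_(w <- outs N) lam N r w * real_node rho N t #|` nodes N| w.

Definition lin_dep_with_one (I : finType) (P : {set I}) (f : I -> R -> R) : Prop :=
  exists (c : I -> R) (c0 : R),
    (c0 != 0 \/ exists s, (s \in P) && (c s != 0)) /\
    (forall t, c0 + \sum_(s in P) c s * f s t = 0).

Definition affine_symmetry (rho : R -> R) (I : finType) (zeta : R)
    (alpha beta gamma : I -> R) : Prop :=
  [/\ (0 < #|I|)%N,
      (forall t, \sum_(s : I) alpha s * rho (beta s * t + gamma s) = zeta) &
      (forall P : {set I}, P \proper setT ->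
          ~ lin_dep_with_one P (fun s t => rho (beta s * t + gamma s)))].

Definition reducible (rho : R -> R) N : Prop :=
  exists (U P : {fset nat}) (kappa beta alpha : nat -> R) (zeta : R),
    U != fset0 /\
    (forall u, u \in U -> u \in nodes N /\ u \notin ins N) /\
    (forall u v, u \in U -> edgeb N v u = (v \in P)) /\
    (forall v, v \in P -> kappa v != 0) /\
    (forall u, u \in U -> beta u != 0 /\ alpha u != 0) /\
    (forall u v, u \in U -> v \in P -> weight N u v = beta u * kappa v) /\
    affine_symmetry rho zeta (fun u : U => alpha (val u))
          (fun u : U => beta (val u)) (fun u : U => bias N (val u)).

Definition irreducible (rho : R -> R) N : Prop := ~ reducible rho N.

Definition non_degenerate N : Prop :=
  (forall u, u \in nodes N -> u \notin ins N -> anc N (outs N) u) /\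
  (forall w, w \in outs N -> exists r, lam N r w != 0).

Definition regularG (rho : R -> R) (Vin : {fset nat}) N : Prop :=
  [/\ wf_GFNN N, ins N = Vin, irreducible rho N & non_degenerate N].

Definition regularL (rho : R -> R) (Vin : {fset nat}) N : Prop :=
  regularG rho Vin N /\ layered N.

Definition rho_modification (rho : R -> R) N N' : Prop :=
  wf_GFNN N /\ irreducible rho N /\
  exists (A B P : {fset nat}) (n : nat) (c : 'I_n -> nat)
         (zeta : R) (alpha beta : nat -> R) (alpha' beta' gamma' : 'I_n -> R)
         (kappa nu : nat -> R),
  let inC x := [exists p, c p == x] in
  let inW w := (w \in nodes N) && has (fun a => edgeb N a w) A in
   (A != fset0 /\ [disjoint A & B] /\
    (forall u, u \in A `|` B -> u \in nodes N /\ u \notin ins N) /\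
    (forall u v, u \in A `|` B -> edgeb N v u = (v \in P))) /\
   ((0 < n)%N /\
    affine_symmetry rho zeta
     (fun s : (A `|` B) + 'I_n => match s with inl u => alpha (val u) | inr p => alpha' p end)
     (fun s : (A `|` B) + 'I_n => match s with inl u => beta (val u) | inr p => beta' p end)
     (fun s : (A `|` B) + 'I_n => match s with inl u => bias N (val u) | inr p => gamma' p end)) /\
   ((forall v, v \in P -> kappa v != 0) /\
    (forall u v, u \in A `|` B -> v \in P -> weight N u v = beta u * kappa v)) /\
   ((forall w, inW w -> nu w != 0 /\ forall u, u \in A -> edgeb N u w) /\
    (forall w u, inW w -> u \in A -> weight N w u = nu w * alpha u)) /\
   (injective c /\ (forall p, c p \notin nodes N `\` A)) /\
   (* added edges carry nonzero weights (as required of a GFNN) *)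
   ((forall p, beta' p != 0) /\
    (forall p w, inW w -> alpha' p != 0) /\
    (forall w u, inW w -> u \in B -> weight N w u = 0 -> alpha u != 0)) /\
   (ins N' = ins N /\
    (forall x, (x \in nodes N') = ((x \in nodes N) && (x \notin A)) || inC x) /\
    (forall p v, weight N' (c p) v = if v \in P then beta' p * kappa v else 0) /\
    (forall p u, ~~ inC u -> weight N' u (c p) = if inW u then - (alpha' p * nu u) else 0) /\
    (forall u v, ~~ inC u -> ~~ inC v ->
       weight N' u v = if (u \in A) || (v \in A) then 0
                       else if inW u && (v \in B) then weight N u v - alpha v * nu u
                       else weight N u v) /\
    (forall p, bias N' (c p) = gamma' p) /\
    (forall x, ~~ inC x -> bias N' x = if x \in A then 0
                                    else if inW x then bias N x + zeta * nu x
                                    else bias N x)) /\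
   (([disjoint A & outs N] /\ outs N' = outs N /\ lam0 N' = lam0 N /\ lam N' = lam N)
    \/
    exists mu : 'I_D -> R,
      (A `<=` outs N)%fset /\
      (forall r u, u \in A -> lam N r u = mu r * alpha u) /\
      (forall r, lam0 N' r = lam0 N r + zeta * mu r) /\
      (forall r p, lam N' r (c p) = - (alpha' p * mu r)) /\
      (forall r x, ~~ inC x -> lam N' r x = if x \in A then 0
                                         else if x \in B then lam N r x - alpha x * mu r
                                         else lam N r x) /\
      (forall x, (x \in outs N') =
         [|| inC x, (x \in outs N) && (x \notin A `|` B)
           | (x \in B) && [exists r, lam N' r x != 0]])).

Inductive rho_iso (rho : R -> R) (Vin : {fset nat}) : GFNN D -> GFNN D -> Prop :=
| rho_iso_refl N : regularG rho Vin N -> rho_iso rho Vin N N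
| rho_iso_step N N' M : regularG rho Vin N -> rho_modification rho N N' ->
    rho_iso rho Vin N' M -> rho_iso rho Vin N M.

Definition equivalence_on (T : Type) (S : T -> Prop) (rel : T -> T -> Prop) : Prop :=
  [/\ (forall x, S x -> rel x x),
      (forall x y, S x -> S y -> rel x y -> rel y x) &
      (forall x y z, S x -> S y -> S z -> rel x y -> rel y z -> rel x z)].

End Defs.

(* The realization of a well-formed network is the unique solution, on its nodes, of
   R_u = rho (\sum_v omega_uv R_v + theta_u), with R_u = t_u on inputs: by acyclicity,
   iterating these equations #|nodes| times forgets the initial values.

   In a rho-modification every node u of A and of B computes rho (beta_u s + theta_u)
   with s = \sum_(v in P) kappa_v R_v, so the affine symmetry at s gives
     \sum_(u in A) alpha_u R_u + \sum_(u in B) alpha_u R_u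
       + \sum_p alpha'_p rho (beta'_p s + gamma'_p) = zeta.
   A child w of A receives nu_w \sum_(u in A) alpha_u R_u from A (an output r receives
   mu_r times that sum); the modification replaces this by the contributions of the new
   nodes, the corrections on the edges from B and the shift zeta nu_w of the bias
   (zeta mu_r of lambda^(r)), which by the identity amount to the same. So the old
   values, extended by rho (beta'_p s + gamma'_p) on the new nodes, solve the equations
   of the modified network, and the realizations agree.

   A modification between regular networks is undone by the modification that deletes
   the new nodes and re-creates A: the roles of A and of the new nodes in the symmetry
   are exchanged and nu, mu become -nu, -mu. Hence chains of modifications can be
   reversed. *)

From HB Require Import structures.
From mathcomp Require Import all_boot all_order all_algebra.
From mathcomp Require Import finmap.
From mathcomp Require Import reals topology normedtype.
From mathcomp Require Import boolp ring zify.

Set Implicit Arguments.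
Unset Strict Implicit.
Unset Printing Implicit Defensive.
Import Order.TTheory GRing.Theory Num.Theory.
Local Open Scope fset_scope.
Local Open Scope ring_scope.

Section WellFormed.
Variables (R : realType) (D : nat) (N : GFNN R D).
Hypothesis wfN : wf_GFNN N.

Lemma wf_acyclic : acyclic N. Proof. by case: wfN. Qed.

Lemma wf_insP u : u \in ins N <-> u \in nodes N /\ parentless N u.
Proof. by case: wfN => _ [H _]; apply: H. Qed.

Lemma wf_outs u : u \in outs N -> u \in nodes N /\ u \notin ins N.
Proof. by case: wfN => _ [_ [H _]]; apply: H. Qed.

Lemma wf_weight u v : weight N u v != 0 -> u \in nodes N /\ v \in nodes N.
Proof. by case: wfN => _ [_ [_ [H _]]]; apply: H. Qed.

Lemma wf_bias u : bias N u != 0 -> u \in nodes N /\ u \notin ins N.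
Proof. by case: wfN => _ [_ [_ [_ [H _]]]]; apply: H. Qed.

Lemma wf_lam r w : lam N r w != 0 -> w \in outs N.
Proof. by case: wfN => _ [_ [_ [_ [_ H]]]]; apply: H. Qed.

Lemma wf_ins_nodes u : u \in ins N -> u \in nodes N.
Proof. by case/wf_insP. Qed.

Lemma wf_lam_out r w : w \notin outs N -> lam N r w = 0.
Proof. by apply: contraNeq; apply: wf_lam. Qed.

Lemma wf_weight_out u v : (v \notin nodes N) || (u \notin nodes N) -> weight N u v = 0.
Proof. by apply: contraTeq => /wf_weight [-> ->]. Qed.

Lemma wf_sum_outs r (h : nat -> R) :
  \sum_(w <- outs N) lam N r w * h w = \sum_(w <- nodes N) lam N r w * h w.
Proof.
apply: big_fset_incl => [|w _ /wf_lam_out ->]; last by rewrite mul0r.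
by apply/fsubsetP => w /wf_outs[].
Qed.

Lemma wf_path_nodes v p :
  path (edgeb N) v p -> last v p \in nodes N -> all (mem (nodes N)) (v :: p).
Proof.
elim: p v => [|x p IHp] v /=; first by rewrite andbT.
by move=> /andP[/and3P[-> _ _] pp] /(IHp _ pp).
Qed.

Lemma acyclic_path_uniq v p : path (edgeb N) v p -> uniq (v :: p).
Proof.
elim: p v => [|x p IHp] v // /andP[e pp]; rewrite cons_uniq IHp // andbT.
apply/negP => vin; have : path (edgeb N) v (x :: p) by rewrite /= e.
case/splitPr: vin => p1 p2; rewrite cat_path /= => /and3P[pp1 el _].
have cyc : path (edgeb N) v (rcons p1 v) by rewrite rcons_path pp1 el.
by have := wf_acyclic cyc; rewrite last_rcons eqxx -size_eq0 size_rcons => /(_ isT).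
Qed.

Lemma acyclic_path_size v p :
  path (edgeb N) v p -> last v p \in nodes N -> (size p < #|` nodes N|)%N.
Proof.
move=> pp lp; have /allP sub := wf_path_nodes pp lp.
exact: uniq_leq_size (acyclic_path_uniq pp) sub.
Qed.

End WellFormed.

Section FixedPoint.
Variables (R : realType) (D : nat) (rho : R -> R) (N : GFNN R D) (t : nat -> R).
Hypothesis wfN : wf_GFNN N.

Let init (v : nat) : R := if v \in ins N then t v else 0.

Definition node_update (h : nat -> R) (u : nat) : R :=
  if u \in ins N then t u else rho (\sum_(v <- nodes N) weight N u v * h v + bias N u).

Definition node_value : nat -> R := real_node rho N t #|` nodes N|.

Lemma real_node_iter k u :
  real_node rho N t k u = iter k node_update init u.
Proof.
elim: k u => [|k IHk] u /=; first by rewrite /init; case: ifP.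
rewrite /node_update; case: ifP => // _; congr (rho (_ + _)).
by apply: eq_bigr => v _; rewrite IHk.
Qed.

Lemma node_update_nodes h h' :
  {in nodes N, h =1 h'} -> node_update h =1 node_update h'.
Proof.
move=> eq_h u; rewrite /node_update; case: ifP => // _; congr (rho (_ + _)).
by rewrite !big_seq; apply: eq_bigr => v /eq_h ->.
Qed.

Lemma iter_node_update_local k u h h' :
  (forall v p, size p = k -> path (edgeb N) v p -> last v p = u -> h v = h' v) ->
  iter k node_update h u = iter k node_update h' u.
Proof.
elim: k u h h' => [|k IHk] u h h' eq_h /=; first exact: (eq_h u [::]).
rewrite /node_update; case: ifP => // _; congr (rho (_ + _)).
apply: eq_bigr => v _; have [->|nz] := eqVneq (weight N u v) 0; first by rewrite !mul0r.
congr (_ * _); apply: IHk => w p sp pp lp; apply: (eq_h w (rcons p u)).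
- by rewrite size_rcons sp.
- by have [uN vN] := wf_weight wfN nz; rewrite rcons_path pp lp /edgeb vN uN nz.
- by rewrite last_rcons.
Qed.

Lemma iter_node_update_stable h h' u : u \in nodes N ->
  iter #|` nodes N| node_update h u = iter #|` nodes N| node_update h' u.
Proof.
move=> uN; apply: iter_node_update_local => v p sp pp lp.
by have := acyclic_path_size wfN pp; rewrite lp sp ltnn => /(_ uN).
Qed.

Lemma node_value_fixpoint : {in nodes N, node_value =1 node_update node_value}.
Proof.
move=> u uN; rewrite (node_update_nodes (h' := iter #|` nodes N| node_update init)).
  by rewrite /node_value real_node_iter -iterS iterSr; apply: iter_node_update_stable.
by move=> v _; rewrite /node_value real_node_iter.
Qed.

Lemma node_value_unique h :
  {in nodes N, h =1 node_update h} -> {in nodes N, h =1 node_value}.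
Proof.
move=> h_fix u uN.
have iter_h k : {in nodes N, iter k node_update h =1 h}.
  elim: k => [|k IHk] v vN //=; rewrite (h_fix v vN); exact: node_update_nodes.
rewrite /node_value real_node_iter -(iter_h #|` nodes N| u uN).
exact: iter_node_update_stable.
Qed.

End FixedPoint.

Lemma sum_fset_mask (V : nmodType) (X U : {fset nat}) (h : nat -> V) : X `<=` U ->
  \sum_(v <- U) (if v \in X then h v else 0) = \sum_(v <- X) h v.
Proof.
move=> XU; rewrite -(big_fset_incl _ XU); last by move=> x _ /negPf ->.
by rewrite !big_seq; apply: eq_bigr => v ->.
Qed.

Lemma affine_symmetry_reindex (R : realType) (rho : R -> R) (I J : finType) (zeta : R)
    (aI bI gI : I -> R) (aJ bJ gJ : J -> R) (f : I -> J) : bijective f ->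
  aJ \o f =1 aI -> bJ \o f =1 bI -> gJ \o f =1 gI ->
  affine_symmetry rho zeta aI bI gI -> affine_symmetry rho zeta aJ bJ gJ.
Proof.
move=> f_bij ha hb hg [I_gt0 sym_eq indep]; have [g fK gK] := f_bij; split.
- by rewrite -(bij_eq_card f_bij).
- move=> t; rewrite -(sym_eq t) (reindex f) /=; last exact: onW_bij.
  by apply: eq_bigr => i _; rewrite -ha -hb -hg.
- move=> Q Q_proper [cc [c0 [c_nz c_eq]]]; apply: (indep [set i | f i \in Q]).
    move: Q_proper; rewrite !properT; apply: contra_neq => QT.
    apply/setP => j; rewrite in_setT -[j]gK.
    by have := in_setT (g j); rewrite -QT inE.
  exists (cc \o f), c0; split.
    case: c_nz => [|[j /andP[jQ cj]]]; [by left | right; exists (g j)].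
    by rewrite inE /= gK jQ.
  move=> t; rewrite -[RHS](c_eq t); congr (_ + _).
  rewrite [RHS](reindex f) /=; last exact: onW_bij.
  by apply: eq_big => i; rewrite ?inE // -hb -hg.
Qed.

Section Modification.
Variables (R : realType) (D : nat) (rho : R -> R) (N N' : GFNN R D).
Variables (A B P : {fset nat}) (n : nat) (c : 'I_n -> nat) (zeta : R)
  (alpha beta : nat -> R) (alpha' beta' gamma' : 'I_n -> R) (kappa nu : nat -> R).
Let inC x := [exists p, c p == x].
Let inW w := (w \in nodes N) && has (fun a => edgeb N a w) A.
Hypothesis wfN : wf_GFNN N.
Hypothesis wfN' : wf_GFNN N'.
Hypothesis A_neq0 : A != fset0.
Hypothesis AB_disj : [disjoint A & B].
Hypothesis AB_nodes : forall u, u \in A `|` B -> u \in nodes N /\ u \notin ins N.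
Hypothesis AB_parents : forall u v, u \in A `|` B -> edgeb N v u = (v \in P).
Hypothesis n_gt0 : (0 < n)%N.
Hypothesis symmetry : affine_symmetry rho zeta
  (fun s : (A `|` B) + 'I_n => match s with inl u => alpha (val u) | inr p => alpha' p end)
  (fun s : (A `|` B) + 'I_n => match s with inl u => beta (val u) | inr p => beta' p end)
  (fun s : (A `|` B) + 'I_n => match s with inl u => bias N (val u) | inr p => gamma' p end).
Hypothesis kappa_neq0 : forall v, v \in P -> kappa v != 0.
Hypothesis AB_weights : forall u v, u \in A `|` B -> v \in P -> weight N u v = beta u * kappa v.
Hypothesis W_children : forall w, inW w -> nu w != 0 /\ forall u, u \in A -> edgeb N u w.
Hypothesis W_weights : forall w u, inW w -> u \in A -> weight N w u = nu w * alpha u.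
Hypothesis c_inj : injective c.
Hypothesis c_fresh : forall p, c p \notin nodes N `\` A.
Hypothesis beta'_neq0 : forall p, beta' p != 0.
Hypothesis alpha'_neq0 : forall p w, inW w -> alpha' p != 0.
Hypothesis B_alpha_neq0 : forall w u, inW w -> u \in B -> weight N w u = 0 -> alpha u != 0.
Hypothesis ins_mod : ins N' = ins N.
Hypothesis nodes_mod : forall x, (x \in nodes N') = ((x \in nodes N) && (x \notin A)) || inC x.
Hypothesis weight_mod_new :
  forall p v, weight N' (c p) v = if v \in P then beta' p * kappa v else 0.
Hypothesis weight_mod_to_new :
  forall p u, ~~ inC u -> weight N' u (c p) = if inW u then - (alpha' p * nu u) else 0.
Hypothesis weight_mod_old : forall u v, ~~ inC u -> ~~ inC v ->
  weight N' u v = if (u \in A) || (v \in A) then 0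
                  else if inW u && (v \in B) then weight N u v - alpha v * nu u
                  else weight N u v.
Hypothesis bias_mod_new : forall p, bias N' (c p) = gamma' p.
Hypothesis bias_mod_old : forall x, ~~ inC x ->
  bias N' x = if x \in A then 0 else if inW x then bias N x + zeta * nu x else bias N x.
Hypothesis outs_mod :
  ([disjoint A & outs N] /\ outs N' = outs N /\ lam0 N' = lam0 N /\ lam N' = lam N)
  \/
  exists mu : 'I_D -> R,
    (A `<=` outs N)%fset /\
    (forall r u, u \in A -> lam N r u = mu r * alpha u) /\
    (forall r, lam0 N' r = lam0 N r + zeta * mu r) /\
    (forall r p, lam N' r (c p) = - (alpha' p * mu r)) /\
    (forall r x, ~~ inC x -> lam N' r x = if x \in A then 0
                                       else if x \in B then lam N r x - alpha x * mu r
                                       else lam N r x) /\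
    (forall x, (x \in outs N') =
       [|| inC x, (x \in outs N) && (x \notin A `|` B)
         | (x \in B) && [exists r, lam N' r x != 0]]).

Lemma A_nodes u : u \in A -> u \in nodes N.
Proof. by move=> uA; apply: (AB_nodes _).1; rewrite in_fsetU uA. Qed.

Lemma A_notin_B u : u \in A -> u \notin B.
Proof. exact: (fdisjointP AB_disj). Qed.

Lemma B_in_AB u : u \in B -> u \in A `|` B.
Proof. by rewrite in_fsetU => ->; rewrite orbT. Qed.

Lemma B_nodes u : u \in B -> u \in nodes N.
Proof. by move=> uB; apply: (AB_nodes (B_in_AB uB)).1. Qed.

Lemma B_notin_A u : u \in B -> u \notin A.
Proof. by apply: contraL; apply: A_notin_B. Qed.

Lemma P_nodes v : v \in P -> v \in nodes N.
Proof.
have [a aA] := fset0Pn _ A_neq0; move=> vP.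
by have /and3P[] : edgeb N v a by rewrite AB_parents // in_fsetU aA.
Qed.

Lemma A_notin_P a : a \in A -> a \notin P.
Proof.
move=> aA; apply/negP => aP; have e : edgeb N a a by rewrite AB_parents // in_fsetU aA.
by have /= := @wf_acyclic _ _ _ wfN a [:: a]; rewrite e eqxx => /(_ isT isT).
Qed.

Lemma W_notin_AB w : inW w -> w \notin A `|` B.
Proof.
case/andP => _ /hasP[a aA]; apply: contraL => wAB.
by rewrite AB_parents //; apply: A_notin_P.
Qed.

Lemma inC_c p : inC (c p).
Proof. by apply/existsP; exists p. Qed.

Lemma inC_A x : inC x -> x \in nodes N -> x \in A.
Proof.
by case/existsP => p /eqP <- xN; have := c_fresh p; rewrite in_fsetD xN andbT negbK.
Qed.

Lemma old_notin_C x : x \in nodes N -> x \notin A -> ~~ inC x.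
Proof. by move=> xN; apply: contra => /inC_A; apply. Qed.

Lemma inC_notin_B x : inC x -> x \notin B.
Proof.
by apply: contraL => xB; rewrite old_notin_C ?B_nodes ?B_notin_A.
Qed.

Lemma inC_notin_P x : inC x -> x \notin P.
Proof.
by apply: contraL => xP; rewrite old_notin_C ?P_nodes //; apply: contraL xP; apply: A_notin_P.
Qed.

Lemma inC_notin_ins x : inC x -> x \notin ins N.
Proof.
apply: contraL => xi; rewrite old_notin_C ?wf_ins_nodes //; apply: contraL xi => xA.
by apply: (AB_nodes _).2; rewrite in_fsetU xA.
Qed.

Lemma B_notin_C u : u \in B -> ~~ inC u.
Proof. by apply: contraL; apply: inC_notin_B. Qed.

Lemma B_notin_W u : u \in B -> inW u = false.
Proof. by move=> uB; apply: contraTF (B_in_AB uB); apply: W_notin_AB. Qed.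

Lemma new_notin_nodes x : inC x -> x \notin A -> x \notin nodes N.
Proof. by move=> xC; apply: contra => /(inC_A xC). Qed.

Lemma P_notin_A v : v \in P -> v \notin A.
Proof. by apply: contraL; apply: A_notin_P. Qed.

Lemma P_notin_C v : v \in P -> ~~ inC v.
Proof. by apply: contraL; apply: inC_notin_P. Qed.

Lemma sum_new_nodes (U : {fset nat}) (h : nat -> R) : (forall p, c p \in U) ->
  \sum_(v <- U) (if inC v then h v else 0) = \sum_(p < n) h (c p).
Proof.
move=> cU.
have split_C v : (if inC v then h v else 0) = \sum_(p < n) (if c p == v then h v else 0).
  case: ifP => [/existsP[q /eqP <-]|/negbT/existsPn vC].
    rewrite (bigD1 q) //= eqxx big1 ?addr0 // => p pq.
    by rewrite (inj_eq c_inj) (negPf pq).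
  by rewrite big1 // => p _; rewrite (negPf (vC p)).
rewrite (eq_bigr _ (fun v _ => split_C v)) exchange_big /=; apply: eq_bigr => p _.
rewrite (big_fsetD1 (c p)) //= eqxx big1_fset ?addr0 // => v.
by rewrite in_fsetD1 eq_sym => /andP[/negPf ->].
Qed.

(* [a] and [a'] are the incoming coefficients of a node (its weights, or the output
   scalars lambda^(r)) before and after the modification, and [m] is its factor nu_w
   (resp. mu_r), or 0 when the node has no parent in A. *)
Definition compensated (a a' : nat -> R) (m : R) : Prop :=
  [/\ forall v, v \in A -> a v = m * alpha v,
      forall p, a' (c p) = - (alpha' p * m) &
      forall v, ~~ inC v ->
        a' v = if v \in A then 0 else if v \in B then a v - alpha v * m else a v].

Lemma P_sub_nodes' : P `<=` nodes N'.
Proof.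
apply/fsubsetP => v vP.
by rewrite nodes_mod P_nodes //= P_notin_A.
Qed.

Lemma old_node_compensated x : x \in nodes N -> x \notin A ->
  exists m, bias N' x = bias N x + zeta * m /\ compensated (weight N x) (weight N' x) m.
Proof.
move=> xN xA; have xC := old_notin_C xN xA.
exists (if inW x then nu x else 0); split.
  by rewrite bias_mod_old // (negPf xA); case: ifP; rewrite ?mulr0 ?addr0.
split=> [v vA | p | v vC]; last 2 first.
- by rewrite weight_mod_to_new //; case: ifP; rewrite ?mulr0 ?oppr0.
- rewrite weight_mod_old // (negPf xA) /=; case: ifP => // _.
  by case: (inW x) (v \in B) => [] [] //=; rewrite mulr0 subr0.
case xW: (inW x); first exact: W_weights.
rewrite mul0r; apply: contraFeq xW => nz.
by rewrite /inW xN; apply/hasP; exists v; rewrite // /edgeb nz xN A_nodes.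
Qed.

Lemma outputs_compensated r :
  exists m, lam0 N' r = lam0 N r + zeta * m /\ compensated (lam N r) (lam N' r) m.
Proof.
case: outs_mod => [[A_outs [_ [-> ->]]] | [mu [_ [lamA [lam0E [lamC [lamE _]]]]]]].
  have lamA v : v \in A -> lam N r v = 0.
    by move=> vA; apply: wf_lam_out => //; apply: (fdisjointP A_outs).
  exists 0; rewrite mulr0 addr0; split=> //; split=> [v /lamA -> | p | v _].
  - by rewrite mul0r.
  - rewrite mulr0 oppr0; have [cA|cnA] := boolP (c p \in A); first exact: lamA.
    apply: wf_lam_out => //; apply: contra (c_fresh p) => /(wf_outs wfN)[cN _].
    by rewrite in_fsetD cN cnA.
  - by case: ifP => [/lamA //|_]; rewrite mulr0 subr0; case: ifP.
exists (mu r); split=> //; split=> [v|p|v]; [exact: lamA | exact: lamC | exact: lamE].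
Qed.

Definition patch_new (g : 'I_n -> R) (f : nat -> R) (x : nat) : R :=
  if [pick p | c p == x] is Some p then g p else f x.

Lemma patch_new_c g f p : patch_new g f (c p) = g p.
Proof. by rewrite /patch_new; case: pickP => [q /eqP/c_inj -> //|/(_ p)]; rewrite eqxx. Qed.

Lemma patch_new_old g f x : ~~ inC x -> patch_new g f x = f x.
Proof.
by move=> /existsPn xC; rewrite /patch_new; case: pickP => // q; rewrite (negPf (xC q)).
Qed.

Section Realization.
Variable t : nat -> R.
Let F := node_value rho N t.
Let S := \sum_(v <- P) kappa v * F v.

Definition modified_value : nat -> R := patch_new (fun p => rho (beta' p * S + gamma' p)) F.

Lemma modified_value_new p : modified_value (c p) = rho (beta' p * S + gamma' p).
Proof. exact: patch_new_c. Qed.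

Lemma modified_value_old x : ~~ inC x -> modified_value x = F x.
Proof. exact: patch_new_old. Qed.

Lemma node_value_AB u : u \in A `|` B -> F u = rho (beta u * S + bias N u).
Proof.
move=> uAB; have [uN uins] := AB_nodes uAB.
rewrite /F node_value_fixpoint // /node_update (negPf uins); congr (rho (_ + _)).
have P_sub : P `<=` nodes N by apply/fsubsetP => v; apply: P_nodes.
rewrite -(big_fset_incl _ P_sub) => [|v vN vP]; last first.
  by have := AB_parents v uAB; rewrite (negPf vP) /edgeb vN uN => /negbFE/eqP ->; rewrite mul0r.
rewrite /S mulr_sumr !big_seq; apply: eq_bigr => v vP.
by rewrite AB_weights // mulrA.
Qed.

Lemma symmetry_at_parents :
  \sum_(u <- A) alpha u * F u + \sum_(u <- B) alpha u * F u
  + \sum_(p < n) alpha' p * modified_value (c p) = zeta.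
Proof.
case: symmetry => _ /(_ S) <- _; rewrite big_sumType /=; congr (_ + _); last first.
  by apply: eq_bigr => p _; rewrite modified_value_new.
have -> : \sum_(i : A `|` B) alpha (val i) * rho (beta (val i) * S + bias N (val i))
    = \sum_(u <- A `|` B) alpha u * F u.
  by rewrite big_seq_fsetE /=; apply: eq_bigr => -[u uAB] _; rewrite node_value_AB.
rewrite [RHS](big_fsetID _ (mem A)) /=; congr (_ + _); apply: eq_fbigl => x; rewrite !inE /=.
  by case xA: (x \in A); rewrite ?andbF.
by case xA: (x \in A); rewrite ?andbT //= (negPf (A_notin_B xA)).
Qed.

Lemma compensated_sum (U : {fset nat}) a a' m :
  A `<=` U -> B `<=` U -> (forall p, c p \in U) ->
  (forall v, v \notin nodes N -> a v = 0) -> compensated a a' m ->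
  \sum_(v <- U) a' v * modified_value v + zeta * m = \sum_(v <- U) a v * F v.
Proof.
move=> AU BU CU a_out [aA a'C a'E].
have split_v v : a' v * modified_value v = (if inC v then a' v * modified_value v else 0)
    + (a v * F v - (if v \in A then a v * F v else 0)
       - (if v \in B then m * (alpha v * F v) else 0)).
  have [vC|vC] := boolP (inC v).
    have [vA|vA] := boolP (v \in A); first by rewrite (negPf (A_notin_B vA)) !subrr addr0.
    by rewrite (negPf (inC_notin_B vC)) a_out ?mul0r ?subrr ?addr0 ?new_notin_nodes.
  rewrite modified_value_old // a'E // add0r.
  have [vA|vA] := boolP (v \in A); first by rewrite (negPf (A_notin_B vA)) mul0r !subrr.
  by case: (v \in B); rewrite subr0 //; ring.
have sum_C : \sum_(p < n) a' (c p) * modified_value (c p)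
    = - m * \sum_(p < n) alpha' p * modified_value (c p).
  by rewrite mulr_sumr; apply: eq_bigr => p _; rewrite a'C; ring.
have sum_A : \sum_(v <- A) a v * F v = m * \sum_(v <- A) alpha v * F v.
  by rewrite mulr_sumr; apply: eq_big_seq => v /aA ->; rewrite mulrA.
rewrite (eq_bigr _ (fun v _ => split_v v)) big_split !sumrB /= sum_new_nodes //.
by rewrite !sum_fset_mask // sum_C sum_A -mulr_sumr -symmetry_at_parents; ring.
Qed.

Lemma compensated_sum_nodes a a' m :
  (forall v, v \notin nodes N -> a v = 0) -> (forall v, v \notin nodes N' -> a' v = 0) ->
  compensated a a' m ->
  \sum_(v <- nodes N') a' v * modified_value v + zeta * m = \sum_(v <- nodes N) a v * F v.
Proof.
move=> a_out a'_out cmp.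
rewrite (big_fset_incl _ (fsubsetUr (nodes N) (nodes N'))); last first.
  by move=> v _ /a'_out ->; rewrite mul0r.
rewrite [RHS](big_fset_incl _ (fsubsetUl (nodes N) (nodes N'))); last first.
  by move=> v _ /a_out ->; rewrite mul0r.
apply: compensated_sum => //.
- by apply/fsubsetP => v /A_nodes vN; rewrite in_fsetU vN.
- by apply/fsubsetP => v /B_nodes vN; rewrite in_fsetU vN.
- by move=> p; rewrite in_fsetU nodes_mod inC_c !orbT.
Qed.

Lemma modified_value_fixpoint :
  {in nodes N', modified_value =1 node_update rho N' t modified_value}.
Proof.
move=> x; rewrite nodes_mod => /orP[/andP[xN xA] | /existsP[p /eqP <-]].
- have [m [biasE cmp]] := old_node_compensated xN xA.
  rewrite modified_value_old ?old_notin_C // /F node_value_fixpoint // /node_update ins_mod.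
  case: ifP => // _; congr rho; rewrite biasE -(compensated_sum_nodes _ _ cmp); first ring.
  + by move=> v vN; apply: wf_weight_out; rewrite ?vN.
  + by move=> v vN; apply: wf_weight_out; rewrite ?vN.
- rewrite modified_value_new /node_update ins_mod (negPf (inC_notin_ins (inC_c p))).
  rewrite bias_mod_new /S mulr_sumr -(sum_fset_mask _ P_sub_nodes').
  congr (rho (_ + _)); apply: eq_bigr => v _; rewrite weight_mod_new.
  case: ifP => [vP|_]; last by rewrite mul0r.
  by rewrite modified_value_old ?mulrA ?P_notin_C.
Qed.

Lemma realization_modified r : realization rho N t r = realization rho N' t r.
Proof.
have [m [lam0E cmp]] := outputs_compensated r.
rewrite /realization lam0E -addrA !wf_sum_outs //; congr (_ + _).
rewrite -(compensated_sum_nodes _ _ cmp); last 2 first.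
- by move=> v vN; apply: wf_lam_out => //; apply: contra vN => /(wf_outs wfN)[].
- by move=> v vN; apply: wf_lam_out => //; apply: contra vN => /(wf_outs wfN')[].
rewrite addrC; congr (_ + _); apply: eq_big_seq => v vN.
by rewrite (node_value_unique wfN' modified_value_fixpoint).
Qed.

End Realization.

Lemma modification_realization : realization rho N = realization rho N'.
Proof. by apply: funext => t; apply: funext; apply: realization_modified. Qed.


Section Reverse.
Hypothesis irrN' : irreducible rho N'.
Hypothesis ndN : non_degenerate N.

Lemma A_card_gt0 : (0 < #|` A|)%N.
Proof. by rewrite cardfs_gt0. Qed.

Let m := #|` A|.
Let cA (q : 'I_m) : nat := nth 0 (enum_fset A) q.
Let idx (x : nat) : 'I_m := insubd (Ordinal A_card_gt0) (index x (enum_fset A)).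
Let inA x := [exists q, cA q == x].
Let C : {fset nat} := seq_fset tt (map c (enum 'I_n)).
Let inW' w := (w \in nodes N') && has (fun a => edgeb N' a w) C.
Let alpha_rev := patch_new alpha' alpha.
Let beta_rev := patch_new beta' beta.

Lemma mem_C x : (x \in C) = inC x.
Proof.
rewrite seq_fsetE; apply/mapP/existsP => [[p _ ->]|[p /eqP <-]]; first by exists p.
by exists p; rewrite ?mem_enum.
Qed.

Lemma cA_in q : cA q \in A.
Proof. exact: mem_nth. Qed.

Lemma cA_idx x : x \in A -> cA (idx x) = x.
Proof. by move=> xA; rewrite /cA /idx insubdK ?nth_index // -topredE /= index_mem. Qed.

Lemma inA_E x : inA x = (x \in A).
Proof.
by apply/existsP/idP => [[q /eqP <-]|xA]; [exact: cA_in | exists (idx x); rewrite cA_idx].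
Qed.

Lemma cA_inj : injective cA.
Proof. by move=> q q' /eqP; rewrite /cA nth_uniq ?fset_uniq // => /eqP/val_inj. Qed.

Lemma card_C : #|` C| = n.
Proof.
have c_uniq : uniq (map c (enum 'I_n)) by rewrite map_inj_uniq ?enum_uniq.
by rewrite size_seq_fset undup_id // size_map size_enum_ord.
Qed.

Lemma old_nodes' x : x \in nodes N -> x \notin A -> x \in nodes N'.
Proof. by move=> xN xA; rewrite nodes_mod xN xA. Qed.

Lemma W_nodes w : inW w -> [/\ w \in nodes N, w \notin A, w \in nodes N' & ~~ inC w].
Proof.
move=> wW; have wN : w \in nodes N by case/andP: wW.
have wA : w \notin A by apply: contra (W_notin_AB wW); rewrite in_fsetU => ->.
by split=> //; [exact: old_nodes' | exact: old_notin_C].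
Qed.

Lemma C_edge_W p w : inW w -> edgeb N' (c p) w.
Proof.
move=> wW; have [_ _ wN' wC] := W_nodes wW; have [nu_nz _] := W_children wW.
rewrite /edgeb nodes_mod inC_c orbT wN' weight_mod_to_new // wW oppr_eq0.
by rewrite mulf_neq0 // (alpha'_neq0 _ wW).
Qed.

Lemma inW'_E w : inW' w = inW w.
Proof.
apply/idP/idP => [/andP[wN' /hasP[a]]|wW]; last first.
  have [_ _ wN' _] := W_nodes wW; rewrite /inW' wN'; apply/hasP.
  by exists (c (Ordinal n_gt0)); rewrite ?mem_C ?inC_c ?C_edge_W.
rewrite mem_C => /existsP[p /eqP <-] /and3P[_ _]; have [/existsP[q /eqP <-]|wC] := boolP (inC w).
  by rewrite weight_mod_new (negPf (inC_notin_P (inC_c p))) eqxx.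
by rewrite weight_mod_to_new //; case: (inW w); rewrite ?eqxx.
Qed.

Lemma parents_new' p v : edgeb N' v (c p) = (v \in P).
Proof.
rewrite /edgeb weight_mod_new; case: ifP => vP; last by rewrite eqxx !andbF.
rewrite (fsubsetP P_sub_nodes') // nodes_mod inC_c orbT.
by rewrite mulf_neq0 ?beta'_neq0 ?kappa_neq0.
Qed.

Lemma parents_B' u v : u \in B -> edgeb N' v u = (v \in P).
Proof.
move=> uB; have [uN _] := AB_nodes (B_in_AB uB).
have uC := B_notin_C uB; have uA := B_notin_A uB.
have [/existsP[p /eqP <-]|vC] := boolP (inC v).
  rewrite (negPf (inC_notin_P (inC_c p))) /edgeb weight_mod_to_new // B_notin_W //.
  by rewrite eqxx !andbF.
have [vA|vA] := boolP (v \in A).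
  by rewrite (negPf (A_notin_P vA)) /edgeb weight_mod_old // vA orbT eqxx !andbF.
rewrite -(AB_parents v (B_in_AB uB)) /edgeb weight_mod_old // (negPf uA) (negPf vA).
by rewrite B_notin_W //= !nodes_mod uN uA (negPf vC) (negPf uC) vA !orbF !andbT.
Qed.

Lemma C_B_disj : [disjoint C & B].
Proof. by apply/fdisjointP => x; rewrite mem_C; apply: inC_notin_B. Qed.

Lemma reverse_common_parents :
  C != fset0 /\ [disjoint C & B] /\
  (forall u, u \in C `|` B -> u \in nodes N' /\ u \notin ins N') /\
  (forall u v, u \in C `|` B -> edgeb N' v u = (v \in P)).
Proof.
split; [|split; [|split]].
- by apply/fset0Pn; exists (c (Ordinal n_gt0)); rewrite mem_C inC_c.
- exact: C_B_disj.
- move=> u; rewrite in_fsetU mem_C ins_mod nodes_mod => /orP[uC|uB].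
    by rewrite uC orbT inC_notin_ins.
  by have [uN uins] := AB_nodes (B_in_AB uB); rewrite uN B_notin_A.
- move=> u v; rewrite in_fsetU mem_C => /orP[/existsP[p /eqP <-]|uB].
    exact: parents_new'.
  exact: parents_B'.
Qed.

Lemma reverse_in_weights :
  (forall v, v \in P -> kappa v != 0) /\
  (forall u v, u \in C `|` B -> v \in P -> weight N' u v = beta_rev u * kappa v).
Proof.
split=> // u v; rewrite in_fsetU mem_C => /orP[/existsP[p /eqP <-]|uB] vP.
  by rewrite weight_mod_new vP /beta_rev patch_new_c.
rewrite (weight_mod_old (B_notin_C uB) (P_notin_C vP)) (negPf (B_notin_A uB)).
rewrite (negPf (P_notin_A vP)).
by rewrite B_notin_W //= AB_weights ?B_in_AB // /beta_rev patch_new_old ?B_notin_C.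
Qed.

Lemma reverse_out_weights :
  (forall w, inW' w -> - nu w != 0 /\ forall u, u \in C -> edgeb N' u w) /\
  (forall w u, inW' w -> u \in C -> weight N' w u = - nu w * alpha_rev u).
Proof.
split=> [w|w u]; rewrite inW'_E => wW; first split.
- by rewrite oppr_eq0; case: (W_children wW).
- by move=> u; rewrite mem_C => /existsP[p /eqP <-]; apply: C_edge_W.
- rewrite mem_C => /existsP[p /eqP <-]; have [_ _ _ wC] := W_nodes wW.
  by rewrite weight_mod_to_new // wW /alpha_rev patch_new_c mulNr mulrC.
Qed.

Lemma reverse_new_nodes : injective cA /\ forall q, cA q \notin nodes N' `\` C.
Proof.
split=> [|q]; first exact: cA_inj.
rewrite in_fsetD mem_C nodes_mod cA_in andbF /=.
by case: (inC _).
Qed.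

Lemma reverse_nonzero_weights :
  (forall q, beta (cA q) != 0) /\ (forall q w, inW' w -> alpha (cA q) != 0) /\
  (forall w u, inW' w -> u \in B -> weight N' w u = 0 -> alpha_rev u != 0).
Proof.
split; [|split] => [q|q w|w u].
- have aAB : cA q \in A `|` B by rewrite in_fsetU cA_in.
  have [aN ains] := AB_nodes aAB.
  have /negbNE/hasP[v _ e] : ~~ parentless N (cA q).
    by apply: contra ains => pl; apply/wf_insP.
  have vP : v \in P by rewrite -(AB_parents v aAB).
  move: e; rewrite /edgeb AB_weights // => /and3P[_ _].
  by apply: contraNneq => ->; rewrite mul0r.
- rewrite inW'_E => wW; have := (W_children wW).2 _ (cA_in q).
  by rewrite /edgeb W_weights ?cA_in // => /and3P[_ _]; apply: contraNneq => ->; rewrite mulr0.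
- rewrite inW'_E => wW uB; have [_ wA _ wC] := W_nodes wW.
  rewrite (weight_mod_old wC (B_notin_C uB)) (negPf wA) (negPf (B_notin_A uB)) wW uB /=.
  rewrite /alpha_rev patch_new_old ?B_notin_C // => w0; apply/eqP => alpha0.
  by move: w0; rewrite alpha0 mul0r subr0 => /(B_alpha_neq0 wW uB); rewrite alpha0 eqxx.
Qed.

Lemma reverse_nodes x : (x \in nodes N) = ((x \in nodes N') && (x \notin C)) || inA x.
Proof.
rewrite inA_E mem_C nodes_mod; have [xA|xA] := boolP (x \in A); first by rewrite A_nodes ?orbT.
have [xC|xC] := boolP (inC x); last by rewrite !andbT !orbF.
by rewrite andbF /= (negPf (new_notin_nodes xC xA)).
Qed.

Lemma reverse_weight_new q v :
  weight N (cA q) v = if v \in P then beta (cA q) * kappa v else 0.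
Proof.
have aAB : cA q \in A `|` B by rewrite in_fsetU cA_in.
case: ifP => vP; first exact: AB_weights.
have [vN|vN] := boolP (v \in nodes N); last by rewrite (wf_weight_out wfN) ?vN.
by have := AB_parents v aAB; rewrite vP /edgeb vN (AB_nodes aAB).1 => /negbFE/eqP.
Qed.

Lemma reverse_weight_to_new q u : ~~ inA u ->
  weight N u (cA q) = if inW' u then - (alpha (cA q) * - nu u) else 0.
Proof.
rewrite inW'_E; case: ifP => [uW _|uW _]; first by rewrite W_weights ?cA_in // mulrN opprK mulrC.
apply: contraFeq uW => nz; have [uN aN] := wf_weight wfN nz.
by rewrite /inW uN; apply/hasP; exists (cA q); rewrite ?cA_in // /edgeb aN uN nz.
Qed.

Lemma reverse_weight_old u v : ~~ inA u -> ~~ inA v ->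
  weight N u v = if (u \in C) || (v \in C) then 0
                 else if inW' u && (v \in B) then weight N' u v - alpha_rev v * - nu u
                 else weight N' u v.
Proof.
rewrite !inA_E !mem_C inW'_E => uA vA.
have [uC|uC] := boolP (inC u).
  by rewrite (wf_weight_out wfN) // (new_notin_nodes uC uA) orbT.
have [vC|vC] := boolP (inC v); first by rewrite (wf_weight_out wfN) // new_notin_nodes.
rewrite (weight_mod_old uC vC) (negPf uA) (negPf vA) /=.
by case: ifP => [->|-> //]; rewrite /alpha_rev patch_new_old // mulrN opprK subrK.
Qed.

Lemma reverse_bias_old x : ~~ inA x ->
  bias N x = if x \in C then 0 else if inW' x then bias N' x + zeta * - nu x else bias N' x.
Proof.
rewrite inA_E mem_C inW'_E => xA; have [xC|xC] := boolP (inC x).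
  by apply/eqP; apply: contraNT (new_notin_nodes xC xA) => /(wf_bias wfN)[].
by rewrite bias_mod_old // (negPf xA); case: ifP => [->|-> //]; rewrite mulrN addrK.
Qed.

Lemma reverse_outputs :
  ([disjoint C & outs N'] /\ outs N = outs N' /\ lam0 N = lam0 N' /\ lam N = lam N')
  \/
  exists mu : 'I_D -> R,
    (C `<=` outs N')%fset /\
    (forall r u, u \in C -> lam N' r u = mu r * alpha_rev u) /\
    (forall r, lam0 N r = lam0 N' r + zeta * mu r) /\
    (forall r q, lam N r (cA q) = - (alpha (cA q) * mu r)) /\
    (forall r x, ~~ inA x -> lam N r x = if x \in C then 0
                                      else if x \in B then lam N' r x - alpha_rev x * mu r
                                      else lam N' r x) /\
    (forall x, (x \in outs N) =
       [|| inA x, (x \in outs N') && (x \notin C `|` B)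
         | (x \in B) && [exists r, lam N r x != 0]]).
Proof.
case: outs_mod => [[A_outs [outsE [-> ->]]] | [mu [A_outs [lamA [lam0E [lamC [lamE outsE]]]]]]].
  left; rewrite outsE; split=> //; apply/fdisjointP => x; rewrite mem_C => xC.
  apply/negP => xO; have [xN _] := wf_outs wfN xO.
  by have := fdisjointP A_outs x (inC_A xC xN); rewrite xO.
right; exists (fun r => - mu r); split; last split; last split; last split; last split.
- by apply/fsubsetP => x; rewrite mem_C outsE => ->.
- move=> r u; rewrite mem_C => /existsP[p /eqP <-].
  by rewrite /= lamC /alpha_rev patch_new_c mulNr mulrC.
- by move=> r /=; rewrite lam0E mulrN addrK.
- by move=> r q /=; rewrite lamA ?cA_in // mulrN opprK mulrC.
- move=> r x; rewrite inA_E mem_C => xA; have [xC|xC] := boolP (inC x).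
    apply: wf_lam_out => //; apply: contra (new_notin_nodes xC xA).
    by case/(wf_outs wfN).
  rewrite /= lamE // (negPf xA); case: ifP => [->|-> //].
  by rewrite /alpha_rev patch_new_old // mulrN opprK subrK.
- move=> x; rewrite inA_E outsE !in_fsetU mem_C.
  have [xA|xA] := boolP (x \in A); first by rewrite (fsubsetP A_outs).
  have [xC|xC] /= := boolP (inC x).
    rewrite (negPf (inC_notin_B xC)) /=; apply/negbTE.
    by apply: contra (new_notin_nodes xC xA) => /(wf_outs wfN)[].
  have [xB|xB] /= := boolP (x \in B); last by rewrite !andbT !orbF.
  rewrite !andbF /=; apply/idP/existsP => [xO|[r /(wf_lam wfN) //]].
  exact: ndN.2.
Qed.

Lemma c_in_CB p : c p \in C `|` B.
Proof. by rewrite in_fsetU mem_C inC_c. Qed.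

Lemma B_in_CB u : u \in B -> u \in C `|` B.
Proof. by rewrite in_fsetU => ->; rewrite orbT. Qed.

Lemma AB_notin_A (u : A `|` B) : val u \notin A -> val u \in B.
Proof. by have := fsvalP u; rewrite in_fsetU => /orP[->|]. Qed.

Let u0 : C `|` B := [` c_in_CB (Ordinal n_gt0)].

Lemma val_insubd_CB x : x \in C `|` B -> fsval (insubd u0 x) = x.
Proof. exact: insubdK. Qed.

Lemma insubd_B (u : A `|` B) : val u \notin A -> fsval (insubd u0 (val u)) = val u.
Proof. by move=> uA; rewrite val_insubd_CB ?B_in_CB ?AB_notin_A. Qed.

Let swap (s : (A `|` B) + 'I_n) : (C `|` B) + 'I_m :=
  match s with
  | inl u => if val u \in A then inr (idx (val u)) else inl (insubd u0 (val u))
  | inr p => inl (insubd u0 (c p))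
  end.

Lemma swap_inj : injective swap.
Proof.
move=> [u|p] [u'|p'] /=.
- case: ifP => uA; case: ifP => u'A // [].
    by move/(congr1 cA); rewrite !cA_idx // => /val_inj ->.
  by move/(congr1 (@fsval _ _)); rewrite !insubd_B ?uA ?u'A // => /val_inj ->.
- case: ifP => uA // [] /(congr1 (@fsval _ _)).
  rewrite insubd_B ?uA // val_insubd_CB ?c_in_CB // => ucp.
  by have := AB_notin_A (negbT uA); rewrite ucp (negPf (inC_notin_B (inC_c p'))).
- case: ifP => u'A // [] /(congr1 (@fsval _ _)).
  rewrite insubd_B ?u'A // val_insubd_CB ?c_in_CB // => cpu.
  by have := AB_notin_A (negbT u'A); rewrite -cpu (negPf (inC_notin_B (inC_c p))).
- by move=> [] /(congr1 (@fsval _ _)); rewrite !val_insubd_CB ?c_in_CB // => /c_inj ->.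
Qed.

Lemma swap_bij : bijective swap.
Proof.
apply: inj_card_bij swap_inj _.
rewrite !card_sum !card_ord -!cardfE !cardfsU card_C.
rewrite (disjoint_fsetI0 AB_disj) (disjoint_fsetI0 C_B_disj) !cardfs0 !subn0.
by rewrite /m; lia.
Qed.

Lemma reverse_affine_symmetry : (0 < m)%N /\ affine_symmetry rho zeta
  (fun s : (C `|` B) + 'I_m => match s with inl u => alpha_rev (val u) | inr q => alpha (cA q) end)
  (fun s : (C `|` B) + 'I_m => match s with inl u => beta_rev (val u) | inr q => beta (cA q) end)
  (fun s : (C `|` B) + 'I_m => match s with inl u => bias N' (val u) | inr q => bias N (cA q) end).
Proof.
split; first exact: A_card_gt0.
have notC (u : A `|` B) : val u \notin A -> ~~ inC (val u).
  by move=> uA; apply: B_notin_C; apply: AB_notin_A.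
apply: (affine_symmetry_reindex swap_bij _ _ _ symmetry) => -[u|p] /=;
  rewrite /alpha_rev /beta_rev;
  try by rewrite val_insubd_CB ?c_in_CB // ?patch_new_c ?bias_mod_new.
all: case: ifPn => uA /=; rewrite ?cA_idx // insubd_B //.
all: have uC := notC u uA; rewrite ?patch_new_old //.
by rewrite bias_mod_old // (negPf uA) B_notin_W // AB_notin_A.
Qed.

Lemma modification_reverse : rho_modification rho N' N.
Proof.
split=> //; split=> //.
exists C, B, P, m, cA, zeta, alpha_rev, beta_rev, (fun q => alpha (cA q)),
  (fun q => beta (cA q)), (fun q => bias N (cA q)), kappa, (fun w => - nu w).
exact: (conj reverse_common_parents (conj reverse_affine_symmetry
  (conj reverse_in_weights (conj reverse_out_weights (conj reverse_new_nodes
  (conj reverse_nonzero_weights (conj (conj (esym ins_mod) (conj reverse_nodes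
    (conj reverse_weight_new (conj reverse_weight_to_new (conj reverse_weight_old
    (conj (fun q => erefl) reverse_bias_old))))))
  reverse_outputs))))))).
Qed.

End Reverse.

End Modification.

Section Isomorphism.
Variables (R : realType) (D : nat) (rho : R -> R) (Vin : {fset nat}).
Implicit Types N M K : GFNN R D.

Lemma rho_modification_realization N N' :
  wf_GFNN N' -> rho_modification rho N N' -> realization rho N = realization rho N'.
Proof.
move=> wfN' [wfN [_ [A [B [P [n [c [zeta [alpha [beta [alpha' [beta' [gamma'
  [kappa [nu]]]]]]]]]]]]]]].
cbv zeta => mod; decompose [and] mod.
by apply: (@modification_realization R D rho N N' A B P n c zeta
  alpha beta alpha' beta' gamma' kappa nu).
Qed.

Lemma rho_modification_sym N N' : regularG rho Vin N -> regularG rho Vin N' ->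
  rho_modification rho N N' -> rho_modification rho N' N.
Proof.
move=> [_ _ _ ndN] [wfN' _ irrN' _].
move=> [wfN [_ [A [B [P [n [c [zeta [alpha [beta [alpha' [beta' [gamma'
  [kappa [nu]]]]]]]]]]]]]]].
cbv zeta => mod; decompose [and] mod.
by apply: (@modification_reverse R D rho N N' A B P n c zeta
  alpha beta alpha' beta' gamma' kappa nu).
Qed.

Lemma rho_iso_regular N M : rho_iso rho Vin N M -> regularG rho Vin N /\ regularG rho Vin M.
Proof. by elim=> [N0 regN0|N0 N1 M0 regN0 _ _ [_ regM0]]. Qed.

Lemma rho_iso_trans N M K : rho_iso rho Vin N M -> rho_iso rho Vin M K -> rho_iso rho Vin N K.
Proof. by elim=> // N0 N1 M0 regN0 mod _ IH /IH; apply: rho_iso_step. Qed.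

Lemma rho_iso_sym N M : rho_iso rho Vin N M -> rho_iso rho Vin M N.
Proof.
elim=> [N0 regN0|N0 N1 M0 regN0 mod iso IH]; first exact: rho_iso_refl.
have [regN1 _] := rho_iso_regular iso.
apply: rho_iso_trans IH (rho_iso_step regN1 _ (rho_iso_refl regN0)).
exact: rho_modification_sym.
Qed.

Lemma rho_iso_realization N M :
  rho_iso rho Vin N M -> realization rho N = realization rho M.
Proof.
elim=> // N0 N1 M0 _ mod iso <-; have [[wfN1 _ _ _] _] := rho_iso_regular iso.
exact: rho_modification_realization.
Qed.

Lemma rho_iso_equivalence (S : GFNN R D -> Prop) :
  (forall N, S N -> regularG rho Vin N) -> equivalence_on S (rho_iso rho Vin).
Proof.
move=> S_reg; split=> [N /S_reg|N M _ _|N M K _ _ _].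
- exact: rho_iso_refl.
- exact: rho_iso_sym.
- exact: rho_iso_trans.
Qed.

End Isomorphism.

Unset Implicit Arguments.

Theorem proposition5 (R : realType) (rho : R -> R) (Vin : {fset nat}) (D : nat) :
  nonlinearity rho -> Vin != fset0 ->
  [/\ equivalence_on (regularG rho Vin) (@rho_iso R D rho Vin),
      equivalence_on (regularL rho Vin) (@rho_iso R D rho Vin) &
      (forall N M : GFNN R D, rho_iso rho Vin N M ->
         realization rho N = realization rho M)].
Proof.
move=> _ _; split.
- exact: rho_iso_equivalence.
- by apply: rho_iso_equivalence => N [].
- exact: rho_iso_realization.
Qed.
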